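(* Let $X$ take values in a countable set $\mathcal{X}$, $T\in\{0,1\}$, and $Y$ take values in a countable set $\mathcal{Y}\subseteq\mathbb{R}$, with joint distribution $P$, and let $Q(T\mid X)$ be a model with $Q(T=t\mid X=x)>0$ for all $t,x$. Fix $t\in\{0,1\}$ with $P(T=t)>0$ and $y\in\mathcal{Y}$ with $Z_{y,t}:=\sum_{x}P(Y=y\mid X=x,T=t)P(X=x)\in(0,\infty)$. For a model $M\in\{P,Q\}$ define $$\pi_{y,t}(M)=\sum_{x\in\mathcal{X}}P(Y=y\mid X=x,T=t)\,\frac{P(X=x\mid T=t)}{M(T=t\mid X=x)}.$$ Let $R_{y,t}$ be the distribution on $\mathcal{X}$ with $R_{y,t}(x)=P(Y=y\mid X=x,T=t)P(X=x)/Z_{y,t}$, let $\ell_t(x)=\left(1-\frac{P(T=t\mid X=x)}{Q(T=t\mid X=x)}\right)^2$, and let $k'_{y,t}=Z_{y,t}/P(T=t)$. Then $$|\pi_{y,t}(P)-\pi_{y,t}(Q)|\le k'_{y,t}\,\mathbb{E}_{X\sim R_{y,t}}\big[\ell_t(X)^{1/2}\big].$$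
   Context: Here $P(Y=y\mid X=x,T=t)$, $P(X=x\mid T=t)$, $P(T=t\mid X=x)$ denote conditional probabilities under the data distribution $P$, and $Q(T=t\mid X=x)$ is a propensity score model used in an inverse probability of treatment weighting estimator. *)

From HB Require Import structures.
From mathcomp Require Import all_boot all_order all_algebra.
From mathcomp Require Import all_classical all_reals.
From mathcomp Require Import ereal esum.
Set Implicit Arguments. Unset Strict Implicit. Unset Printing Implicit Defensive.
Import Order.TTheory GRing.Theory Num.Theory.
Local Open Scope ring_scope.
Local Open Scope classical_set_scope.

Section Defs.
Variables (R : realType) (X Y : countType).

(* joint pmf of (X, T, Y): p x t y = P(X = x, T = t, Y = y);
   T in {0,1} is encoded by bool (false = 0, true = 1). *)
Definition is_joint_pmf (p : X -> bool -> Y -> R) : Prop :=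
  (forall x t y, 0 <= p x t y) /\
  (\esum_(z in [set: X * bool * Y]) (p z.1.1 z.1.2 z.2)%:E = 1%E).

(* Marginals (finite since p is summable with total mass 1). *)
Definition PXT (p : X -> bool -> Y -> R) (x : X) (t : bool) : R :=
  fine (\esum_(y in [set: Y]) (p x t y)%:E).
Definition PX (p : X -> bool -> Y -> R) (x : X) : R :=
  fine (\esum_(z in [set: bool * Y]) (p x z.1 z.2)%:E).
Definition PT (p : X -> bool -> Y -> R) (t : bool) : R :=
  fine (\esum_(x in [set: X]) (PXT p x t)%:E).

(* Conditionals (MathComp convention r / 0 = 0). *)
Definition PYgXT (p : X -> bool -> Y -> R) (y : Y) (x : X) (t : bool) : R :=
  p x t y / PXT p x t.
Definition PXgT (p : X -> bool -> Y -> R) (x : X) (t : bool) : R :=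
  PXT p x t / PT p t.
Definition PTgX (p : X -> bool -> Y -> R) (t : bool) (x : X) : R :=
  PXT p x t / PX p x.

Definition Zyt (p : X -> bool -> Y -> R) (y : Y) (t : bool) : \bar R :=
  \esum_(x in [set: X]) (PYgXT p y x t * PX p x)%:E.

(* pi_{y,t}(M), with M x t = M(T=t | X=x) *)
Definition pi_yt (p : X -> bool -> Y -> R) (M : X -> bool -> R)
    (y : Y) (t : bool) : \bar R :=
  \esum_(x in [set: X]) (PYgXT p y x t * PXgT p x t / M x t)%:E.

Definition Pmodel (p : X -> bool -> Y -> R) : X -> bool -> R :=
  fun x t => PTgX p t x.

Definition Ryt (p : X -> bool -> Y -> R) (y : Y) (t : bool) (x : X) : R :=
  PYgXT p y x t * PX p x / fine (Zyt p y t).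

Definition ell (p : X -> bool -> Y -> R) (Q : X -> bool -> R) (t : bool)
    (x : X) : R :=
  (1 - PTgX p t x / Q x t) ^+ 2.

End Defs.

From HB Require Import structures.
From mathcomp Require Import all_boot all_order all_algebra.
From mathcomp Require Import all_classical all_reals.
From mathcomp Require Import ereal esum.
From mathcomp Require Import lra ring.
Import Order.TTheory GRing.Theory Num.Theory.
Set Implicit Arguments. Unset Strict Implicit.
Local Open Scope ring_scope.
Local Open Scope classical_set_scope.

(* By Bayes' rule P(X=x|T=t) / P(T=t|X=x) = P(X=x) / P(T=t), so the x-summand
   of pi_{y,t}(P) is the weight w(x) = P(Y=y|X=x,T=t) P(X=x) / P(T=t) = k' R(x),
   and the x-summand of pi_{y,t}(Q) is w(x) r(x) with
   r(x) = P(T=t|X=x) / Q(T=t|X=x).  As sum_x w(x) = k' is finite,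
   |pi(P) - pi(Q)| <= sum_x w(x) |1 - r(x)| = k' sum_x R(x) sqrt(l_t(x)). *)

Section esum_lemmas.
Variables (R : realType) (T : choiceType).
Implicit Types (A B : set T) (k : R) (f : T -> \bar R).

Lemma esumZl A k f : 0 <= k -> (forall x, 0 <= f x)%E ->
  \esum_(i in A) (k%:E * f i)%E = (k%:E * \esum_(i in A) f i)%E.
Proof.
move=> k0 f0; rewrite /esum -ereal_supZl//; last first.
  by apply/set0P; exists 0%E, set0; [exact: fsets_set0 | rewrite fsbig_set0].
rewrite image_comp; congr ereal_sup.
by apply: eq_imagel => F _ /=; rewrite ge0_mule_fsumr.
Qed.

Lemma subset_esum A B f : A `<=` B ->
  (\esum_(i in A) f i <= \esum_(i in B) f i)%E.
Proof.
move=> AB; apply: ge_ereal_sup => _ [F [finF FA] <-]; apply: esum_ge.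
by exists F => //; split => // z /FA /AB.
Qed.

Lemma abse_esumB_le (a b : T -> R) :
  (forall x, 0 <= a x) -> (forall x, 0 <= b x) ->
  (\esum_(i in [set: T]) (a i)%:E < +oo)%E ->
  (`| \esum_(i in [set: T]) (a i)%:E - \esum_(i in [set: T]) (b i)%:E |
    <= \esum_(i in [set: T]) (`|a i - b i|)%:E)%E.
Proof.
move=> a0 b0 afin.
have esum_EFin_ge0 (c : T -> R) : (forall x, 0 <= c x) ->
    (0 <= \esum_(i in [set: T]) (c i)%:E)%E.
  by move=> c0; apply: esum_ge0 => *; rewrite lee_fin.
have le_sum_dist (c d : T -> R) : (forall x, 0 <= c x) ->
    (\esum_(i in [set: T]) (d i)%:E <=
     \esum_(i in [set: T]) (c i)%:E + \esum_(i in [set: T]) (`|c i - d i|)%:E)%E.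
  move=> c0; rewrite -esumD => [|x _|x _]; rewrite ?lee_fin //.
  apply: le_esum => i _; rewrite -EFinD lee_fin -lerBlDl.
  by rewrite (le_trans (ler_norm _)) // distrC.
have esum_b_le := le_sum_dist _ b a0.
have esum_a_le : (\esum_(i in [set: T]) (a i)%:E <= \esum_(i in [set: T]) (b i)%:E
    + \esum_(i in [set: T]) (`|a i - b i|)%:E)%E.
  by under [X in (_ <= _ + X)%E]eq_esum do rewrite distrC; exact: le_sum_dist.
move: esum_b_le esum_a_le (esum_EFin_ge0 _ a0) (esum_EFin_ge0 _ b0) afin.
move: (\esum_(i in [set: T]) (a i)%:E) (\esum_(i in [set: T]) (b i)%:E)
  (\esum_(i in [set: T]) (`|a i - b i|)%:E).
move=> [A| |] [B| |] [D| |] //= => [|*]; last exact: leey.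
rewrite -!EFinD !lee_fin => ? ? _ _ _; rewrite ler_norml; apply/andP; split; lra.
Qed.

End esum_lemmas.

Section marginals.
Variables (R : realType) (X Y : countType) (p : X -> bool -> Y -> R).
Hypothesis pmf : is_joint_pmf p.

Lemma esum_slice_le x t :
  (\esum_(y in [set: Y]) (p x t y)%:E <=
   \esum_(z in [set: bool * Y]) (p x z.1 z.2)%:E)%E.
Proof.
rewrite -(esum_image _ (pair t) (fun z => (p x z.1 z.2)%:E)); last first.
  by move=> a b _ _ [].
exact: subset_esum.
Qed.

Lemma esum_row_le1 x : (\esum_(z in [set: bool * Y]) (p x z.1 z.2)%:E <= 1)%E.
Proof.
case: pmf => _ <-.
rewrite -(esum_image _ (fun z : bool * Y => (x, z.1, z.2))
  (fun z => (p z.1.1 z.1.2 z.2)%:E)); last by move=> [? ?] [? ?] _ _ [-> ->].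
exact: subset_esum.
Qed.

Lemma esum_slice_ge0 x t : (0 <= \esum_(y in [set: Y]) (p x t y)%:E)%E.
Proof. by apply: esum_ge0 => y _; rewrite lee_fin; case: pmf. Qed.

Lemma esum_row_lty x : (\esum_(z in [set: bool * Y]) (p x z.1 z.2)%:E < +oo)%E.
Proof. exact: le_lt_trans (esum_row_le1 x) (ltry 1). Qed.

Lemma esum_row_fin_num x :
  \esum_(z in [set: bool * Y]) (p x z.1 z.2)%:E \is a fin_num.
Proof.
rewrite ge0_fin_numE ?esum_row_lty //.
exact: le_trans (esum_slice_ge0 x true) (esum_slice_le x true).
Qed.

Lemma esum_slice_fin_num x t : \esum_(y in [set: Y]) (p x t y)%:E \is a fin_num.
Proof.
rewrite ge0_fin_numE ?esum_slice_ge0 //.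
exact: le_lt_trans (esum_slice_le x t) (esum_row_lty x).
Qed.

Lemma PXT_ge0 x t : 0 <= PXT p x t.
Proof. exact/fine_ge0/esum_slice_ge0. Qed.

Lemma PXT_le_PX x t : PXT p x t <= PX p x.
Proof.
by apply: fine_le; rewrite ?esum_slice_fin_num ?esum_row_fin_num ?esum_slice_le.
Qed.

Lemma PX_ge0 x : 0 <= PX p x.
Proof. exact: le_trans (PXT_ge0 x true) (PXT_le_PX x true). Qed.

Lemma PT_ge0 t : 0 <= PT p t.
Proof. by apply: fine_ge0; apply: esum_ge0 => x _; rewrite lee_fin PXT_ge0. Qed.

Lemma PYgXT_ge0 y x t : 0 <= PYgXT p y x t.
Proof. by rewrite divr_ge0 ?PXT_ge0 //; case: pmf. Qed.

Lemma PTgX_ge0 t x : 0 <= PTgX p t x.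
Proof. exact: divr_ge0 (PXT_ge0 x t) (PX_ge0 x). Qed.

Lemma Ryt_ge0 y t x : 0 <= Ryt p y t x.
Proof.
apply: divr_ge0 (mulr_ge0 (PYgXT_ge0 y x t) (PX_ge0 x)) (fine_ge0 _).
by apply: esum_ge0 => x' _; rewrite lee_fin mulr_ge0 ?PYgXT_ge0 ?PX_ge0.
Qed.

End marginals.

Definition ipw_weight (R : realType) (X Y : countType) (p : X -> bool -> Y -> R)
    (y : Y) (t : bool) (x : X) : R :=
  PYgXT p y x t * PX p x / PT p t.

Section inverse_weights.
Variables (R : realType) (X Y : countType) (p : X -> bool -> Y -> R).
Hypothesis pmf : is_joint_pmf p.
Variables (y : Y) (t : bool).

Lemma PX_neq0 x : PXT p x t != 0 -> PX p x != 0.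
Proof.
move=> PXT_neq0; rewrite gt_eqF // (lt_le_trans _ (PXT_le_PX pmf x t)) //.
by rewrite lt0r PXT_neq0 PXT_ge0.
Qed.

Lemma ipw_weight_ge0 x : 0 <= ipw_weight p y t x.
Proof.
exact: divr_ge0 (mulr_ge0 (PYgXT_ge0 pmf y x t) (PX_ge0 pmf x)) (PT_ge0 pmf t).
Qed.

Lemma esum_ipw_weight :
  \esum_(x in [set: X]) (ipw_weight p y t x)%:E = ((PT p t)^-1%:E * Zyt p y t)%E.
Proof.
rewrite -esumZl ?invr_ge0 ?PT_ge0 //; last first.
  by move=> x; rewrite lee_fin mulr_ge0 ?PYgXT_ge0 ?PX_ge0.
by apply: eq_esum => x _; rewrite -EFinM mulrC.
Qed.

Lemma ipw_summand_PE x :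
  PYgXT p y x t * PXgT p x t / PTgX p t x = ipw_weight p y t x.
Proof.
rewrite /ipw_weight /PYgXT /PXgT /PTgX.
have [->|PXT_neq0] := eqVneq (PXT p x t) 0; first by rewrite !(invr0, mulr0, mul0r).
have [->|PT_neq0] := eqVneq (PT p t) 0; first by rewrite !(invr0, mulr0, mul0r).
by field; rewrite PT_neq0 PXT_neq0 PX_neq0.
Qed.

Lemma ipw_summand_modelE (M : X -> bool -> R) x :
  PYgXT p y x t * PXgT p x t / M x t = ipw_weight p y t x * (PTgX p t x / M x t).
Proof.
rewrite /ipw_weight /PXgT /PTgX.
have [PXT0|PXT_neq0] := eqVneq (PXT p x t) 0.
  by rewrite /PYgXT PXT0 !(invr0, mulr0, mul0r).
by rewrite -[LHS]mulr1 -(divff (PX_neq0 PXT_neq0)); ring.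
Qed.

End inverse_weights.

Theorem mainTheorem2 (R : realType) (X Y : countType)
  (p : X -> bool -> Y -> R) (Q : X -> bool -> R) (t : bool) (y : Y) :
  is_joint_pmf p ->
  (forall x s, 0 < Q x s) ->
  (forall x, Q x false + Q x true = 1) ->
  0 < PT p t ->
  (0 < Zyt p y t)%E -> (Zyt p y t < +oo)%E ->
  (`| pi_yt p (Pmodel p) y t - pi_yt p Q y t |
     <= (fine (Zyt p y t) / PT p t)%:E *
        \esum_(x in [set: X]) (Ryt p y t x * Num.sqrt (ell p Q t x))%:E)%E.
Proof.
move=> pmf Q_gt0 _ PT_gt0 Z_gt0 Z_lty. (* Q need not be normalised. *)
have Z_fin : Zyt p y t \is a fin_num by rewrite ge0_fin_numE ?ltW.
have fineZ_gt0 : 0 < fine (Zyt p y t) by apply: fine_gt0; rewrite Z_gt0 Z_lty.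
have k_ge0 : 0 <= fine (Zyt p y t) / PT p t := divr_ge0 (ltW fineZ_gt0) (ltW PT_gt0).
have ipw_weightE x : ipw_weight p y t x = fine (Zyt p y t) / PT p t * Ryt p y t x.
  by rewrite /ipw_weight /Ryt; field; rewrite !gt_eqF.
rewrite /pi_yt /Pmodel; under eq_esum do rewrite (ipw_summand_PE pmf).
under [X in (_ - X)%E]eq_esum do rewrite (ipw_summand_modelE pmf).
apply: le_trans (abse_esumB_le (ipw_weight_ge0 pmf y t) _ _) _.
- move=> x; apply: mulr_ge0 (ipw_weight_ge0 pmf y t x) _.
  exact: divr_ge0 (PTgX_ge0 pmf t x) (ltW (Q_gt0 x t)).
- by rewrite esum_ipw_weight // -(fineK Z_fin) -EFinM ltry.
rewrite -esumZl //; last by move=> x; rewrite lee_fin mulr_ge0 ?Ryt_ge0 ?sqrtr_ge0.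
apply: le_esum => x _; rewrite -EFinM lee_fin [leRHS]mulrA -ipw_weightE.
rewrite -[X in `|X - _|]mulr1 -mulrBr normrM ger0_norm ?ipw_weight_ge0 //.
by rewrite sqrtr_sqr.
Qed.
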